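(* Let $m\ge 0$ be an integer, $\mathbf{X}\in\{0,1\}^{(m+1)\times m}$ and $\mathbf{Y}\in\{0,1\}^{m\times(m+1)}$. Then $\mathbb{D}_{1,0}(\mathbf{X})\cap\mathbb{D}_{0,1}(\mathbf{Y})\neq\emptyset$ if and only if $\mathbb{I}_{0,1}(\mathbf{X})\cap\mathbb{I}_{1,0}(\mathbf{Y})\neq\emptyset$.
   Context: For a binary array $\mathbf{X}$, $\mathbb{D}_{t_r,t_c}(\mathbf{X})$ denotes the set of all arrays obtained from $\mathbf{X}$ by deleting any $t_r$ rows and any $t_c$ columns, and $\mathbb{I}_{t_r,t_c}(\mathbf{X})$ the set of all binary arrays obtained from $\mathbf{X}$ by inserting $t_r$ rows and $t_c$ columns (arbitrary binary content, arbitrary positions). *)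

From mathcomp Require Import all_boot all_algebra.
Set Implicit Arguments. Unset Strict Implicit. Unset Printing Implicit Defensive.

Definition incr (n n' : nat) (f : 'I_n -> 'I_n') : Prop :=
  forall i j : 'I_n, (i < j)%N -> (f i < f j)%N.

(* [deleted tr tc X Z] : Z is obtained from X by deleting (any) tr rows and
   (any) tc columns, i.e. Z belongs to D_{tr,tc}(X). *)
Definition deleted (tr tc : nat) {r c r' c' : nat}
    (X : 'M[bool]_(r, c)) (Z : 'M[bool]_(r', c')) : Prop :=
  r = (r' + tr)%N /\ c = (c' + tc)%N /\
  exists (f : 'I_r' -> 'I_r) (g : 'I_c' -> 'I_c),
    incr f /\ incr g /\ Z = mxsub f g X.

(* [inserted tr tc X W] : W is obtained from X by inserting tr rows and tc
   columns (arbitrary content and positions), i.e. W belongs to I_{tr,tc}(X);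
   equivalently X is obtained from W by deleting those rows/columns. *)
Definition inserted (tr tc : nat) {r c r' c' : nat}
    (X : 'M[bool]_(r, c)) (W : 'M[bool]_(r', c')) : Prop :=
  deleted tr tc W X.

(* An increasing self-map of 'I_n is the identity, so deleting no column
   (resp. no row) leaves the columns (resp. rows) untouched: D_{1,0}(X) is the
   set of row submatrices of X and D_{0,1}(Y) that of column submatrices of Y.
   Two such submatrices coincide exactly when X and Y are the column and row
   submatrices of a common (m+1) x (m+1) array W. *)

From mathcomp Require Import all_boot all_algebra.
From mathcomp Require Import zify.

Set Implicit Arguments.
Unset Strict Implicit.
Unset Printing Implicit Defensive.

Section IncreasingMaps.

Variables n n' : nat.
Implicit Type f : 'I_n -> 'I_n'.

Lemma incr_inj f : incr f -> injective f.
Proof.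
move=> If i j Efij; apply/val_inj/eqP.
by case: (ltngtP i j) => // /If; rewrite Efij ltnn.
Qed.

Lemma leq_incr f : incr f -> forall i : 'I_n, (i <= f i)%N.
Proof.
move=> If [k]; elim: k => [//|k IHk] ltkn.
have ltk1n := ltnW ltkn.
exact: leq_ltn_trans (IHk ltk1n) (If (Ordinal ltk1n) (Ordinal ltkn) (ltnSn k)).
Qed.

Lemma incr_rev f : incr f -> incr (fun i => rev_ord (f (rev_ord i))).
Proof.
move=> If i j ltij /=.
have /If : (rev_ord j < rev_ord i)%N by rewrite /=; have := ltn_ord j; lia.
by have := ltn_ord (f (rev_ord i)); lia.
Qed.

End IncreasingMaps.

Lemma incr_id n (f : 'I_n -> 'I_n) : incr f -> f =1 id.
Proof.
move=> If i; apply/val_inj/eqP; rewrite eqn_leq (leq_incr If i) andbT.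
have := leq_incr (incr_rev If) (rev_ord i); rewrite rev_ordK /=.
by have := ltn_ord (f i); lia.
Qed.

Lemma deleted_rowsP r r' c tr (X : 'M[bool]_(r, c)) (Z : 'M[bool]_(r', c)) :
  r = (r' + tr)%N ->
  deleted tr 0 X Z <-> exists2 f : 'I_r' -> 'I_r, incr f & Z = rowsub f X.
Proof.
move=> Er; split.
- move=> [_ [_ [f [g [If [Ig ->]]]]]]; exists f => //.
  by apply: mxsub_eq_rowsub; apply: incr_id.
- move=> [f If ->]; split=> //; split; first by rewrite addn0.
  by exists f, id; do !split.
Qed.

Lemma deleted_colsP r c c' tc (X : 'M[bool]_(r, c)) (Z : 'M[bool]_(r, c')) :
  c = (c' + tc)%N ->
  deleted 0 tc X Z <-> exists2 g : 'I_c' -> 'I_c, incr g & Z = colsub g X.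
Proof.
move=> Ec; split.
- move=> [_ [_ [f [g [If [Ig ->]]]]]]; exists g => //.
  by apply: mxsub_eq_colsub; apply: incr_id.
- move=> [g Ig ->]; split; first by rewrite addn0.
  by split=> //; exists id, g; do !split.
Qed.

(* A cell (f a', g b') is prescribed by both X and Y, consistently by the
   hypothesis; any other cell by at most one of them, or else set to x0. *)
Lemma mx_amalgam (T : Type) (x0 : T) r r' c c'
    (f : 'I_r' -> 'I_r) (g : 'I_c' -> 'I_c)
    (X : 'M[T]_(r, c')) (Y : 'M[T]_(r', c)) :
  injective f -> injective g -> rowsub f X = colsub g Y ->
  exists W : 'M[T]_(r, c), colsub g W = X /\ rowsub f W = Y.
Proof.
move=> injf injg EXY.
pose W := (\matrix_(a, b)
  if [pick b' | g b' == b] is Some b' then X a b'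
  else if [pick a' | f a' == a] is Some a' then Y a' b else x0)%R.
exists W; split; apply/matrixP => a b; rewrite !mxE.
- case: pickP => [b' /eqP/injg -> // | /(_ b)]; by rewrite eqxx.
- case: pickP => [b' /eqP <- | _].
  + by move/matrixP/(_ a b'): EXY; rewrite !mxE.
  + case: pickP => [a' /eqP/injf -> // | /(_ a)]; by rewrite eqxx.
Qed.

Theorem lemma2 (m : nat) (X : 'M[bool]_(m.+1, m)) (Y : 'M[bool]_(m, m.+1)) :
  (exists Z : 'M[bool]_(m, m), deleted 1 0 X Z /\ deleted 0 1 Y Z) <->
  (exists W : 'M[bool]_(m.+1, m.+1), inserted 0 1 X W /\ inserted 1 0 Y W).
Proof.
have Em : m.+1 = (m + 1)%N by rewrite addn1.
split.
- move=> [Z [/(deleted_rowsP _ _ Em) [f If ->] /(deleted_colsP _ _ Em) [g Ig EZ]]].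
  have [W [EX EY]] := mx_amalgam false (incr_inj If) (incr_inj Ig) EZ.
  exists W; split.
  + by apply/(deleted_colsP _ _ Em); exists g.
  + by apply/(deleted_rowsP _ _ Em); exists f.
- move=> [W [/(deleted_colsP _ _ Em) [g Ig ->] /(deleted_rowsP _ _ Em) [f If ->]]].
  exists (mxsub f g W); split.
  + by apply/(deleted_rowsP _ _ Em); exists f; rewrite // mxsubrc.
  + by apply/(deleted_colsP _ _ Em); exists g; rewrite // mxsubcr.
Qed.
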